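(* For every integer $n\ge 3$, $$M^L(n)\ \ge\ \frac{3\cdot 2^n}{3n-2}.$$
   Context: $\mathbb{F}=\{0,1\}$. The binary $n$-dimensional hypercube $\mathbb{F}^n$ is the graph on $\mathbb{F}^n$ where two words are adjacent iff their Hamming distance is $1$. For a nonempty $C\subseteq\mathbb{F}^n$, $I(\mathbf{x})=N[\mathbf{x}]\cap C$ with $N[\mathbf{x}]$ the words at Hamming distance $\le1$ from $\mathbf{x}$. $C$ is a local identifying code if $I(\mathbf{x})\ne\emptyset$ for all $\mathbf{x}$ and $I(\mathbf{x})\ne I(\mathbf{y})$ for all adjacent $\mathbf{x},\mathbf{y}$. $M^L(n)$ is the minimum cardinality of a local identifying code in $\mathbb{F}^n$. *)

From mathcomp Require Import all_boot all_order all_algebra.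
Set Implicit Arguments. Unset Strict Implicit. Unset Printing Implicit Defensive.

Definition word (n : nat) := {ffun 'I_n -> bool}.

Definition hamming (n : nat) (x y : word n) : nat := #|[set i | x i != y i]|.

Definition closed_nbhd (n : nat) (x : word n) : {set word n} :=
  [set y | hamming x y <= 1].

Definition I_set (n : nat) (C : {set word n}) (x : word n) : {set word n} :=
  closed_nbhd x :&: C.

Definition local_identifying_code (n : nat) (C : {set word n}) : Prop :=
  C != set0 /\
  (forall x : word n, I_set C x != set0) /\
  (forall x y : word n, hamming x y = 1 -> I_set C x != I_set C y).

From mathcomp Require Import all_boot all_order all_algebra.
From mathcomp Require Import zify.
Set Implicit Arguments. Unset Strict Implicit.
Import GRing.Theory Num.Theory.

(* Discharging.  Give a word x with k = |I(x)| codewords in its neighbourhood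
   the share [share k] (0, 3 or 4 for k = 1, 2, >= 3); the shares are chosen so
   that 6 <= k * (6 - share k).  Double counting over the pairs (c, x) with
   c in C and x in N[c] gives
     6 * 2^n <= sum_x k(x) (6 - share k(x)) = sum_(c in C) sum_(x in N[c]) (6 - share k(x)).
   For a fixed codeword c the inner shares add up to at least min(3n, 10):
   if c has no codeword neighbour, I(c) = {c} forces |I(x)| >= 2 at all its n
   neighbours; otherwise c and two neighbours already collect 4 + 3 + 3.
   Hence 6 * 2^n <= |C| (6(n+1) - 10) = 2 |C| (3n - 2) for n >= 4, and n = 3
   follows by integrality. *)

Section FiniteSets.
Local Open Scope nat_scope.
Variable T : finType.
Implicit Types (A : {set T}) (a b d : T).

Lemma card_gt1 A a b : a \in A -> b \in A -> a != b -> 1 < #|A|.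
Proof.
move=> Aa Ab ab; rewrite (cardsD1 a) Aa add1n ltnS.
by apply/card_gt0P; exists b; rewrite !inE eq_sym ab.
Qed.

Lemma card_gt2 A a b d :
  a \in A -> b \in A -> d \in A -> a != b -> a != d -> b != d -> 2 < #|A|.
Proof.
move=> Aa Ab Ad ab ad bd; rewrite (cardsD1 a) Aa add1n ltnS.
by apply: (card_gt1 (a := b) (b := d)); rewrite // !inE eq_sym ?ab ?ad.
Qed.

Lemma card_gt1_neq_set1 A a : a \in A -> A != [set a] -> 1 < #|A|.
Proof.
move=> Aa; apply: contraNT; rewrite -leqNgt => A_le1.
by rewrite eq_sym eqEcard sub1set Aa cards1.
Qed.

End FiniteSets.

Section Hypercube.
Local Open Scope nat_scope.
Variable n : nat.
Implicit Types (x y : word n) (i j : 'I_n).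

Definition flip x i : word n := [ffun j => if j == i then ~~ x i else x j].

Lemma flipE x i j : flip x i j = if j == i then ~~ x i else x j.
Proof. by rewrite ffunE. Qed.

Lemma flipK x i : flip (flip x i) i = x.
Proof. by apply/ffunP => j; rewrite !flipE eqxx; case: eqVneq => [->|]; rewrite ?negbK. Qed.

Lemma flip_neq x i : flip x i != x.
Proof. by apply/negP => /eqP/ffunP/(_ i); rewrite flipE eqxx; case: (x i). Qed.

Lemma flip_inj x : injective (flip x).
Proof.
move=> i j /ffunP/(_ i); rewrite !flipE eqxx.
by case: (eqVneq i j) => // _; case: (x i).
Qed.

Lemma flipC x i j : flip (flip x i) j = flip (flip x j) i.
Proof.
apply/ffunP => k; rewrite !flipE.
have [-> // | ij] := eqVneq i j.
have [kj|kj] := eqVneq k j; have [ki|ki] := eqVneq k i => //.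
by move: ij; rewrite -ki -kj eqxx.
Qed.

Lemma hammingC x y : hamming x y = hamming y x.
Proof. by apply: eq_card => i; rewrite !inE eq_sym. Qed.

Lemma hammingxx x : hamming x x = 0.
Proof. by apply/eqP; rewrite cards_eq0; apply/eqP/setP => i; rewrite !inE eqxx. Qed.

Lemma hamming_eq0 x y : (hamming x y == 0) = (x == y).
Proof.
apply/idP/eqP => [|->]; last by rewrite hammingxx.
rewrite cards_eq0 => /eqP xy; apply/ffunP => i; apply/eqP/negPn/negP => neq_i.
by have := in_set0 i; rewrite -xy inE neq_i.
Qed.

Lemma hamming_flip x i : hamming x (flip x i) = 1.
Proof.
rewrite /hamming (_ : [set j | x j != flip x i j] = [set i]) ?cards1 //.
apply/setP => j; rewrite !inE flipE; case: (eqVneq j i) => [->|]; last by rewrite eqxx.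
by case: (x i).
Qed.

Lemma hamming_eq1 x y : hamming x y = 1 -> exists i, y = flip x i.
Proof.
move/eqP/cards1P => [i xy_i]; exists i; apply/ffunP => j; rewrite flipE.
have : (x j != y j) = (j == i) by rewrite -in_set1 -xy_i inE.
by case: (eqVneq j i) => [->|_ /negbFE/eqP //]; case: (x i); case: (y i).
Qed.

Lemma closed_nbhdE x : closed_nbhd x = x |: [set flip x i | i : 'I_n].
Proof.
apply/setP => y; rewrite !inE; apply/idP/idP.
  case xy: (hamming x y) => [|[|//]] _.
    by move/eqP: xy; rewrite hamming_eq0 => /eqP->; rewrite eqxx.
  by have [i ->] := hamming_eq1 xy; rewrite imset_f ?orbT.
by case/orP => [/eqP->|/imsetP[i _ ->]]; rewrite ?hammingxx ?hamming_flip.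
Qed.

Lemma closed_nbhdC x y : (y \in closed_nbhd x) = (x \in closed_nbhd y).
Proof. by rewrite !inE hammingC. Qed.

Lemma flip_in_closed_nbhd x i : flip x i \in closed_nbhd x.
Proof. by rewrite inE hamming_flip. Qed.

Lemma flip_in_closed_nbhd_flip x i : x \in closed_nbhd (flip x i).
Proof. by rewrite closed_nbhdC flip_in_closed_nbhd. Qed.

Lemma mem_closed_nbhd x : x \in closed_nbhd x.
Proof. by rewrite inE hammingxx. Qed.

Lemma notin_flips x : x \notin [set flip x i | i : 'I_n].
Proof. by apply/imsetP => -[i _ /eqP]; rewrite eq_sym (negbTE (flip_neq x i)). Qed.

Lemma card_closed_nbhd x : #|closed_nbhd x| = n.+1.
Proof.
by rewrite closed_nbhdE cardsU1 notin_flips card_imset ?card_ord //; apply: flip_inj.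
Qed.

Lemma sum_closed_nbhd x (F : word n -> nat) :
  \sum_(y in closed_nbhd x) F y = F x + \sum_i F (flip x i).
Proof.
rewrite closed_nbhdE big_setU1 ?notin_flips //=.
by rewrite big_imset //= => i j _ _; apply: flip_inj.
Qed.

End Hypercube.

Section Discharging.
Local Open Scope nat_scope.
Variables (n : nat) (C : {set word n}).
Implicit Types (x y c : word n) (i j : 'I_n).

Lemma mem_I_set x y : (y \in I_set C x) = (y \in closed_nbhd x) && (y \in C).
Proof. by rewrite inE. Qed.

Lemma sum_card_I_set (F : word n -> nat) :
  \sum_x #|I_set C x| * F x = \sum_(c in C) \sum_(x in closed_nbhd c) F x.
Proof.
transitivity (\sum_x \sum_c ((c \in C) && (x \in closed_nbhd c)) * F x).
  apply: eq_bigr => x _; rewrite -sum1_card big_distrl big_mkcond /=.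
  by apply: eq_bigr => c _; rewrite mem_I_set closed_nbhdC andbC; case: ifP.
rewrite exchange_big [RHS]big_mkcond; apply: eq_bigr => c _ /=.
rewrite big_mkcond; case: (c \in C); last by rewrite big1.
rewrite [RHS]big_mkcond; apply: eq_bigr => x _ /=.
by case: (x \in closed_nbhd c); rewrite ?mul1n ?mul0n.
Qed.

Definition share k := if k <= 1 then 0 else if k == 2 then 3 else 4.

Lemma share_ge3 k : 1 < k -> 3 <= share k.
Proof. by rewrite /share; case: k => [|[|[|k]]]. Qed.

Lemma share_ge4 k : 2 < k -> 4 <= share k.
Proof. by rewrite /share; case: k => [|[|[|k]]]. Qed.

Lemma share_balance k : 0 < k -> 6 + k * share k <= 6 * k.
Proof. by rewrite /share; case: k => [|[|[|k]]] //= _; lia. Qed.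

Definition nbhd_share c := \sum_(x in closed_nbhd c) share #|I_set C x|.

Hypothesis codeC : local_identifying_code C.

Lemma share_two_directions c i j : i != j ->
  10 <= share #|I_set C c| + share #|I_set C (flip c i)| + share #|I_set C (flip c j)| ->
  10 <= nbhd_share c.
Proof.
move=> ij ten; rewrite /nbhd_share sum_closed_nbhd (bigD1 i) //= (bigD1 j) /=;
  last by rewrite eq_sym ij.
by apply: leq_trans ten _; rewrite -!addnA !leq_add2l leq_addr.
Qed.

Lemma nbhd_share_two_code_neighbours c i j :
  c \in C -> flip c i \in C -> flip c j \in C -> i != j -> 10 <= nbhd_share c.
Proof.
move=> Cc Cci Ccj ij; have neq_ij : flip c i != flip c j.
  by apply: contra ij => /eqP/flip_inj ->.
have share_c : 4 <= share #|I_set C c|.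
  apply/share_ge4/(card_gt2 (a := c) (b := flip c i) (d := flip c j));
    by rewrite ?mem_I_set ?Cc ?Cci ?Ccj ?mem_closed_nbhd ?flip_in_closed_nbhd
               // eq_sym flip_neq.
have share_flip k : flip c k \in C -> 3 <= share #|I_set C (flip c k)|.
  move=> Cck; apply/share_ge3/(card_gt1 (a := c) (b := flip c k));
    by rewrite ?mem_I_set ?Cc ?Cck ?mem_closed_nbhd ?flip_in_closed_nbhd_flip
               // eq_sym flip_neq.
have share_ci := share_flip _ Cci; have share_cj := share_flip _ Ccj.
by apply: (share_two_directions ij); lia.
Qed.

Lemma nbhd_share_one_code_neighbour c i :
  c \in C -> flip c i \in C -> (forall j, flip c j \in C -> j = i) ->
  10 <= nbhd_share c.
Proof.
move=> Cc Cci unique_i; have [_ [_ separates]] := codeC.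
have c_near_ci : c \in closed_nbhd (flip c i) by apply: flip_in_closed_nbhd_flip.
have sub_I : I_set C c \subset I_set C (flip c i).
  apply/subsetP => y; rewrite !mem_I_set closed_nbhdE => /andP[/setU1P y_near Cy].
  rewrite Cy andbT; case: y_near => [->|/imsetP[k _ y_def]] //.
  by rewrite y_def (unique_i k) -?y_def // mem_closed_nbhd.
have /subsetPn[z Iz zNI] : ~~ (I_set C (flip c i) \subset I_set C c).
  apply: contra (separates _ _ (hamming_flip c i)) => sub_I'.
  by rewrite eq_sym eqEsubset sub_I sub_I'.
move: Iz; rewrite mem_I_set => /andP[z_near Cz].
have zNc : z \notin closed_nbhd c by move: zNI; rewrite mem_I_set Cz andbT.
have [z_c z_ci] : z != c /\ z != flip c i.
  by split; apply: contraNneq zNc => ->; rewrite ?mem_closed_nbhd ?flip_in_closed_nbhd.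
move: z_near; rewrite closed_nbhdE => /setU1P[/eqP|/imsetP[j _ z_def]].
  by rewrite (negbTE z_ci).
have ij : i != j by apply: contraNneq z_c => ij; rewrite z_def -ij flipK.
apply: (share_two_directions ij).
have share_c : 3 <= share #|I_set C c|.
  apply/share_ge3/(card_gt1 (a := c) (b := flip c i));
    by rewrite ?mem_I_set ?Cc ?Cci ?mem_closed_nbhd ?flip_in_closed_nbhd // eq_sym flip_neq.
have share_ci : 4 <= share #|I_set C (flip c i)|.
  apply/share_ge4/(card_gt2 (a := c) (b := flip c i) (d := z));
    rewrite ?mem_I_set ?Cc ?Cci ?Cz ?c_near_ci ?mem_closed_nbhd // 1?eq_sym //.
  - by rewrite z_def flip_in_closed_nbhd.
  - exact: flip_neq.
have share_cj : 3 <= share #|I_set C (flip c j)|.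
  apply/share_ge3/(card_gt1 (a := c) (b := z)); rewrite 1?eq_sym //.
    by rewrite mem_I_set Cc flip_in_closed_nbhd_flip.
  by rewrite mem_I_set Cz z_def flipC flip_in_closed_nbhd.
lia.
Qed.

Lemma nbhd_share_isolated c :
  c \in C -> (forall j, flip c j \notin C) -> 3 * n <= nbhd_share c.
Proof.
move=> Cc isolated; have [_ [_ separates]] := codeC.
have I_c : I_set C c = [set c].
  apply/setP => y; rewrite mem_I_set closed_nbhdE in_set1.
  apply/idP/eqP => [/andP[/setU1P[//|/imsetP[j _ ->]]] | ->].
    by rewrite (negbTE (isolated j)).
  by rewrite setU11 Cc.
rewrite /nbhd_share sum_closed_nbhd; apply: leq_trans (leq_addl _ _).
have -> : 3 * n = \sum_(j < n) 3 by rewrite sum_nat_const card_ord mulnC.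
apply: leq_sum => j _; apply/share_ge3/(card_gt1_neq_set1 (a := c)).
  by rewrite mem_I_set Cc flip_in_closed_nbhd_flip.
by rewrite -I_c eq_sym separates ?hamming_flip.
Qed.

Lemma nbhd_share_ge c : c \in C -> minn (3 * n) 10 <= nbhd_share c.
Proof.
move=> Cc; have [i Cci | isolated] := pickP (fun j => flip c j \in C); last first.
  by rewrite geq_min nbhd_share_isolated // => j; rewrite isolated.
have [j /andP[ji Ccj] | unique_i] := pickP (fun j => (j != i) && (flip c j \in C)).
  by rewrite geq_min (nbhd_share_two_code_neighbours Cc Cci Ccj) ?orbT // eq_sym.
rewrite geq_min (nbhd_share_one_code_neighbour Cc Cci) ?orbT // => j Ccj.
by apply/eqP; move: (unique_i j); rewrite Ccj andbT => /negbFE.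
Qed.

Lemma card_code_balance :
  6 * 2 ^ n + #|C| * minn (3 * n) 10 <= 6 * (#|C| * n.+1).
Proof.
have [_ [dominating _]] := codeC.
have count1 : \sum_x #|I_set C x| = #|C| * n.+1.
  under eq_bigr do rewrite -[#|_|]muln1.
  rewrite sum_card_I_set -sum_nat_const; apply: eq_bigr => c _.
  by rewrite sum1_card card_closed_nbhd.
have count_share : #|C| * minn (3 * n) 10 <= \sum_x #|I_set C x| * share #|I_set C x|.
  by rewrite sum_card_I_set -sum_nat_const; apply: leq_sum => c; apply: nbhd_share_ge.
have balance : \sum_x (6 + #|I_set C x| * share #|I_set C x|) <= \sum_x 6 * #|I_set C x|.
  by apply: leq_sum => x _; rewrite share_balance ?card_gt0.
move: balance; rewrite big_split -big_distrr count1 /= sum_nat_const card_ffun card_bool card_ord.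
by apply: leq_trans; rewrite mulnC leq_add2l.
Qed.

End Discharging.

Lemma card_local_identifying_code_ge n (C : {set word n}) :
  3 <= n -> local_identifying_code C -> 3 * 2 ^ n <= (3 * n - 2) * #|C|.
Proof.
move=> n_ge3 /card_code_balance; move: #|C| => k.
have [-> | n_ge4] := eqVneq n 3; first by rewrite (_ : 2 ^ 3 = 8) //; lia.
have -> : minn (3 * n) 10 = 10 by lia.
by move: (2 ^ n) => P; nia.
Qed.

Local Open Scope ring_scope.

Theorem mainTheorem5 (n : nat) (hn : (3 <= n)%N) (C : {set word n}) :
  local_identifying_code C ->
  ((3 * 2 ^ n)%N%:R / (3 * n%:R - 2) <= #|C|%:R :> rat).
Proof.
move=> /(card_local_identifying_code_ge hn) bound.
have -> : 3 * n%:R - 2 = (3 * n - 2)%N%:R :> rat by rewrite natrB ?natrM //; lia.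
by rewrite ler_pdivrMr ?ltr0n -?natrM ?ler_nat ?[(#|C| * _)%N]mulnC //; lia.
Qed.
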